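(* Fix a real number $m\ge1$. There is a positive constant $C$ (depending only on $m$ and $r$) such that for all $N\ge1$ and all $1\le k\le N$, $$E\big[X_{k,N}^m\big]\le\Big(\frac kN\Big)^{mr}\Big(1+\frac Ck\Big).$$
   Context: Fix $r\in(0,1)$. Multitype Yule process: at time $0$ a single individual of type $1$ is born; no deaths; each individual independently gives birth at rate $1$; a newborn has, independently, its parent's type with probability $1-r$ and otherwise a brand-new type. Individuals are numbered in order of birth (the initial one is the 1st); if the $k$-th individual born has a type different from its parent, that type is called type $k$. $T_N$ is the time the population reaches size $N$; $X_{k,N}$ is the fraction of individuals at time $T_N$ with type in $\{1,\dots,k\}$. *)

From mathcomp Require Import all_boot all_order all_algebra.
From mathcomp Require Import reals exp.
Set Implicit Arguments. Unset Strict Implicit. Unset Printing Implicit Defensive.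
Import Order.TTheory GRing.Theory Num.Theory.
Local Open Scope ring_scope.

(* Multitype Yule process observed at the successive birth times T_1, T_2, ...
   A configuration of a population of size n is the sequence s of length n
   whose j-th entry (0-based) is the type label of the (j+1)-th individual born.
   At time T_n each of the n individuals is equally likely to be the parent of
   the (n+1)-th individual (independent rate-1 exponential clocks); the newborn
   keeps the parent's type with probability 1-r, and otherwise gets the brand
   new type n+1.

   [yule_exp r n f] is the expectation of f(configuration at time T_(n+1)),
   i.e. when the population has size n+1. *)
Fixpoint yule_exp (R : realType) (r : R) (n : nat) (f : seq nat -> R) : R :=
  match n with
  | 0%N => f [:: 1%N]
  | n'.+1 =>
      yule_exp r n' (fun s =>
        \sum_(p < n'.+1)
          (n'.+1%:R)^-1 * ((1 - r) * f (rcons s (nth 0%N s p))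
                           + r * f (rcons s n'.+2)))
  end.

Definition frac_types (R : realType) (k : nat) (s : seq nat) : R :=
  (count (fun t => (t <= k)%N) s)%:R / (size s)%:R.

Definition EXm (R : realType) (r m : R) (k N : nat) : R :=
  yule_exp r N.-1 (fun s => powR (frac_types R k s) m).

From mathcomp Require Import all_boot all_order all_algebra.
From mathcomp Require Import reals exp sequences.
From mathcomp Require Import boolp.
From mathcomp Require Import ring lra zify.
Set Implicit Arguments. Unset Strict Implicit. Unset Printing Implicit Defensive.
Import Order.TTheory GRing.Theory Num.Theory.
Local Open Scope ring_scope.

(* Let Y_n be the number of individuals with type in {1,..,k} at population n,
   so that X_{k,N} = Y_N / N <= (Y_N + m) / N, and let h y = (y + m)^m.
   A newborn at population n joins {1,..,k} with probability (1 - r) Y_n / n,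
   and since y (h (y + 1) - h y) <= m h y, the expectation of h (Y_n) grows
   by a factor at most 1 + b / n, with b = (1 - r) m.  As Y_k = k and
   1 + b / (n + 1) <= ((n + 1) / n)^b, this gives
   E[h (Y_N)] <= h k (1 + b / k) (N / k)^b, and
   N^-m h k (N / k)^b = (k / N)^(m r) (1 + m / k)^m, where
   (1 + m / k)^m (1 + b / k) = 1 + O(1 / k). *)

Lemma powR_expR (R : realType) (x a : R) : 0 < x -> powR x a = expR (a * ln x).
Proof. by move=> x_gt0; rewrite -[in LHS](lnK x_gt0) -expRM mulrC. Qed.

Lemma powR_ratio_ge1Ddiv (R : realType) (x b : R) : 0 < x -> 0 <= b ->
  1 + b / (x + 1) <= powR ((x + 1) / x) b.
Proof.
move=> x_gt0 b_ge0; have x1_gt0 : 0 < x + 1 by lra.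
rewrite powR_expR ?divr_gt0 //.
apply: le_trans (expR_ge1Dx _); rewrite lerD2l; apply: ler_wpM2l => //.
have -> : (x + 1) / x = (1 - (x + 1)^-1)^-1 by field; lra.
have inv_lt1 : (x + 1)^-1 < 1 by rewrite invf_lt1 //; lra.
rewrite lnV ?posrE ?subr_gt0 // lerNr.
by apply: le_ln1Dx; rewrite ltrN2.
Qed.

Lemma shifted_powR_drift (R : realType) (m : R) (y : nat) : 0 < m ->
  y%:R * (powR (y.+1%:R + m) m - powR (y%:R + m) m) <= m * powR (y%:R + m) m.
Proof.
move=> m_gt0; have y_ge0 : 0 <= y%:R :> R by [].
set u := y%:R + m; have u_gt0 : 0 < u by rewrite /u; lra.
have ui_gt0 : 0 < u^-1 by rewrite invr_gt0.
have -> : y.+1%:R + m = u * (1 + u^-1) by rewrite /u -natr1; field; rewrite gt_eqF.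
rewrite powRM ?(ltW u_gt0) ?addr_ge0 ?(ltW ui_gt0) //.
set P := powR u m; set Q := powR (1 + u^-1) m.
have P_ge0 : 0 <= P by apply: powR_ge0.
have Q_le : Q <= expR (m / u).
  rewrite /Q powR_expR ?ler_expR ?addr_gt0 //.
  by apply: ler_wpM2l; [exact: ltW | apply: le_ln1Dx; lra].
have yexp_le : y%:R * expR (m / u) <= u.
  have : 1 - m / u <= (expR (m / u))^-1 by rewrite -expRN; apply: expR_ge1Dx.
  rewrite -(ler_pM2l u_gt0) -(ler_pM2r (expR_gt0 (m / u))) mulfVK ?gt_eqF ?expR_gt0 //.
  by have -> : u * (1 - m / u) = y%:R by rewrite /u; field; rewrite gt_eqF.
have yE_le : y%:R * Q <= u by apply: le_trans yexp_le; apply: ler_wpM2l.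
have -> : m * P = y%:R * (P * Q - P) + P * (u - y%:R * Q) by rewrite /u; ring.
by rewrite lerDl mulr_ge0 // subr_ge0.
Qed.

Lemma powR_1Dmul_le (R : realType) (m t : R) : 0 <= m -> 0 <= t <= 1 ->
  powR (1 + m * t) m <= 1 + m * m * expR (m * m) * t.
Proof.
move=> m_ge0 /andP[t_ge0 t_le1]; set z := m * (m * t).
have z_ge0 : 0 <= z by rewrite !mulr_ge0.
have z_le : z <= m * m by rewrite /z mulrA ler_piMr ?mulr_ge0.
apply: (@le_trans _ _ (expR z)).
  have mt_ge0 : 0 <= m * t by rewrite mulr_ge0.
  rewrite powR_expR ?ler_expR; last by lra.
  by apply: ler_wpM2l => //; apply: le_ln1Dx; lra.
have expR_le : expR z <= 1 + z * expR z.
  have : 1 - z <= (expR z)^-1 by rewrite -expRN; apply: expR_ge1Dx.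
  rewrite -(ler_pM2r (expR_gt0 z)) mulVf ?gt_eqF ?expR_gt0 //; lra.
apply: le_trans expR_le _; rewrite lerD2l.
have -> : m * m * expR (m * m) * t = z * expR (m * m) by rewrite /z; ring.
by apply: ler_wpM2l => //; rewrite ler_expR.
Qed.

Lemma prod_1Dmul_le (R : realFieldType) (a c t : R) :
  0 <= a -> 0 <= c -> 0 <= t <= 1 ->
  (1 + a * t) * (1 + c * t) <= 1 + (a + c + a * c) * t.
Proof.
move=> a_ge0 c_ge0 /andP[t_ge0 t_le1].
have : a * c * (t * t) <= a * c * t.
  by apply: ler_wpM2l; rewrite ?mulr_ge0 ?ler_piMr.
nra.
Qed.

Lemma powR_rescale (R : realType) (m b x y c : R) : 0 <= m -> 0 < x -> 0 < y ->
  powR y^-1 m * (powR (x + m) m * c * powR (y / x) b)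
    = powR (x / y) (m - b) * (powR (1 + m / x) m * c).
Proof.
move=> m_ge0 x_gt0 y_gt0.
have mx_gt0 : 0 < 1 + m / x by have := divr_ge0 m_ge0 (ltW x_gt0); lra.
have x_pos : x \is Num.pos by []; have y_pos : y \is Num.pos by [].
have -> : x + m = x * (1 + m / x) by field; rewrite gt_eqF.
rewrite !powR_expR ?invr_gt0 ?divr_gt0 ?mulr_gt0 //.
rewrite lnV // lnM ?posrE // !ln_div //.
have -> : (m - b) * (ln x - ln y) = m * - ln y + m * ln x + b * (ln y - ln x).
  by ring.
by rewrite [m * (ln x + _)]mulrDr !expRD; ring.
Qed.

(* The configurations that [yule_exp r n] can reach, i.e. at population size [n.+1]. *)
Definition yule_cfg (n : nat) (s : seq nat) : bool :=
  (size s == n.+1) && all (fun t => (t <= n.+1)%N) s.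

Definition yule_step (R : realType) (r : R) (n : nat) (f : seq nat -> R)
    (s : seq nat) : R :=
  \sum_(p < n.+1)
    (n.+1%:R)^-1 * ((1 - r) * f (rcons s (nth 0%N s p)) + r * f (rcons s n.+2)).

Definition count_le (k : nat) (s : seq nat) : nat := count (fun t => (t <= k)%N) s.

Lemma yule_expS (R : realType) (r : R) n f :
  yule_exp r n.+1 f = yule_exp r n (yule_step r n f).
Proof. by []. Qed.

Lemma yule_cfg_rcons n s x :
  yule_cfg n s -> (x <= n.+2)%N -> yule_cfg n.+1 (rcons s x).
Proof.
move=> /andP[/eqP sz_s le_s] le_x; rewrite /yule_cfg size_rcons sz_s eqxx.
rewrite all_rcons le_x /=; apply/allP => t /(allP le_s); exact: leqW.
Qed.

Lemma count_le_rcons k s x : count_le k (rcons s x) = (count_le k s + (x <= k))%N.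
Proof. by rewrite /count_le -cats1 count_cat /= addn0. Qed.

Lemma sum_nth_count_le (R : pzSemiRingType) k s :
  \sum_(p < size s) ((nth 0%N s p <= k)%N)%:R = (count_le k s)%:R :> R.
Proof.
elim: s => [|x s IH]; first by rewrite big_ord0.
by rewrite big_ord_recl /= IH /count_le /= natrD.
Qed.

Lemma yule_step_count (R : realType) (r : R) (h : nat -> R) n k s :
  size s = n.+1 -> (k <= n.+1)%N ->
  let y := count_le k s in
  yule_step r n (fun s => h (count_le k s)) s
    = h y + (1 - r) * y%:R / n.+1%:R * (h y.+1 - h y).
Proof.
move=> sz_s le_kn y.
have hD (b : bool) : h (y + b)%N = h y + b%:R * (h y.+1 - h y).
  by case: b; rewrite ?addn1 ?addn0 /=; ring.
have new_gtk : (n.+2 <= k)%N = false by apply/negbTE; rewrite -ltnNge ltnS.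
rewrite /yule_step.
under eq_bigr => p _ do rewrite !count_le_rcons new_gtk addn0 hD.
set c := (1 - r) / n.+1%:R * (h y.+1 - h y).
transitivity (\sum_(p < n.+1) (n.+1%:R^-1 * h y + c * ((nth 0%N s p <= k)%N)%:R)).
  by apply: eq_bigr => p _; rewrite /c; ring.
rewrite big_split /= sumr_const card_ord -mulr_sumr -sz_s sum_nth_count_le sz_s.
rewrite -mulr_natr /c; field; by rewrite addrC natr1 pnatr_eq0.
Qed.

Section YuleExpectation.
Variables (R : realType) (r : R).

Lemma eq_yule_exp n (f g : seq nat -> R) : f =1 g -> yule_exp r n f = yule_exp r n g.
Proof. by move=> /funext ->. Qed.

Lemma yule_expZ n (c : R) f :
  yule_exp r n (fun s => c * f s) = c * yule_exp r n f.
Proof.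
elim: n f => [|n IH] f //; rewrite !yule_expS -IH; apply: eq_yule_exp => s.
by rewrite /yule_step mulr_sumr; apply: eq_bigr => p _; ring.
Qed.

Lemma yule_exp_cst n (c : R) : yule_exp r n (fun=> c) = c.
Proof.
elim: n => [|n IH] //; rewrite yule_expS -[RHS]IH; apply: eq_yule_exp => s.
rewrite /yule_step sumr_const card_ord -mulr_natr.
by field; rewrite addrC natr1 pnatr_eq0.
Qed.

Hypothesis r01 : 0 <= r <= 1.

Lemma ler_yule_exp n (f g : seq nat -> R) :
  (forall s, yule_cfg n s -> f s <= g s) -> yule_exp r n f <= yule_exp r n g.
Proof.
have [r0 r1] := andP r01.
elim: n f g => [|n IH] f g le_fg; first exact: le_fg.
rewrite !yule_expS; apply: IH => s cfg_s; apply: ler_sum => p _.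
have [/eqP sz_s le_s] := andP cfg_s.
have le_nth : (nth 0%N s p <= n.+2)%N.
  by apply/leqW/(allP le_s)/mem_nth; rewrite sz_s.
rewrite ler_wpM2l ?invr_ge0 ?ler0n //.
by rewrite lerD // ler_wpM2l ?subr_ge0 // le_fg // yule_cfg_rcons.
Qed.

Lemma eq_yule_exp_in n (f g : seq nat -> R) :
  (forall s, yule_cfg n s -> f s = g s) -> yule_exp r n f = yule_exp r n g.
Proof.
by move=> eq_fg; apply/le_anti/andP; split; apply: ler_yule_exp => s /eq_fg ->.
Qed.

Lemma yule_exp_count_init (h : nat -> R) k :
  yule_exp r k (fun s => h (count_le k.+1 s)) = h k.+1.
Proof.
rewrite -[RHS](yule_exp_cst k); apply: eq_yule_exp_in => s /andP[/eqP sz_s le_s].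
by move: le_s; rewrite all_count sz_s /count_le => /eqP ->.
Qed.

End YuleExpectation.

Section CountDrift.
Variables (R : realType) (r m : R) (h : nat -> R).
Hypotheses (r01 : 0 <= r <= 1) (m_ge0 : 0 <= m) (h_ge0 : forall y, 0 <= h y).
Hypothesis h_drift : forall y : nat, y%:R * (h y.+1 - h y) <= m * h y.

Let b := (1 - r) * m.

Let b_ge0 : 0 <= b.
Proof. by rewrite mulr_ge0 // subr_ge0; case/andP: r01. Qed.

Let one_Ddiv_ge1 (x : nat) : 1 <= 1 + b / x%:R.
Proof. by rewrite lerDl divr_ge0. Qed.

Lemma yule_exp_count_step k n : (k <= n.+1)%N ->
  yule_exp r n.+1 (fun s => h (count_le k s))
    <= (1 + b / n.+1%:R) * yule_exp r n (fun s => h (count_le k s)).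
Proof.
move=> le_kn; rewrite yule_expS -yule_expZ //; apply: ler_yule_exp => // s.
case/andP => /eqP sz_s _; rewrite yule_step_count //.
set y := count_le k s.
have -> : (1 - r) * y%:R / n.+1%:R * (h y.+1 - h y)
          = (1 - r) / n.+1%:R * (y%:R * (h y.+1 - h y)) by ring.
have -> : (1 + b / n.+1%:R) * h y = h y + (1 - r) / n.+1%:R * (m * h y).
  by rewrite /b; ring.
rewrite lerD2l; apply: ler_wpM2l => //.
by rewrite divr_ge0 // subr_ge0; case/andP: r01.
Qed.

Lemma yule_exp_count_growth k n : (0 < k)%N -> (k <= n)%N ->
  yule_exp r n (fun s => h (count_le k s))
    <= h k * (1 + b / k%:R) * powR (n%:R / k%:R) b.
Proof.
move=> k_gt0; elim: n => [|n IH]; first by rewrite leqNgt k_gt0.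
have hkb_ge0 : 0 <= h k * (1 + b / k%:R) by rewrite mulr_ge0 // (le_trans ler01).
rewrite leq_eqVlt ltnS => /orP[/eqP-> | le_kn].
  apply: le_trans (yule_exp_count_step _) _ => //.
  by rewrite yule_exp_count_init // divff ?pnatr_eq0 // powR1 mulr1 mulrC.
apply: le_trans (yule_exp_count_step _) _; first exact: leqW.
have n_gt0 : 0 < n%:R :> R by rewrite ltr0n (leq_trans k_gt0).
have k_gt0R : 0 < k%:R :> R by rewrite ltr0n.
apply: le_trans (ler_wpM2l (le_trans ler01 (one_Ddiv_ge1 _)) (IH le_kn)) _.
rewrite mulrCA; apply: ler_wpM2l => //.
have -> : n.+1%:R / k%:R = (n%:R + 1) / n%:R * (n%:R / k%:R) :> R.
  by rewrite -natr1; field; rewrite !gt_eqF.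
rewrite [X in _ <= X]powRM ?divr_ge0 ?addr_ge0 ?ler0n //.
apply: ler_wpM2r; first exact: powR_ge0.
by rewrite -natr1; apply: powR_ratio_ge1Ddiv.
Qed.

Lemma yule_exp_count_le k N : (1 <= k <= N)%N ->
  yule_exp r N.-1 (fun s => h (count_le k s))
    <= h k * (1 + b / k%:R) * powR (N%:R / k%:R) b.
Proof.
case/andP=> k_gt0; rewrite leq_eqVlt => /orP[/eqP <- | lt_kN].
  case: k k_gt0 => // k _.
  rewrite succnK (yule_exp_count_init r01) (@divff _ k.+1%:R) ?pnatr_eq0 // powR1 mulr1.
  by rewrite -[X in X <= _]mulr1; apply: ler_wpM2l.
apply: le_trans (yule_exp_count_growth k_gt0 _) _; first by lia.
apply: ler_wpM2l; first by rewrite mulr_ge0 // (le_trans ler01).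
apply: ge0_ler_powR; rewrite ?nnegrE ?divr_ge0 ?ler0n //.
by apply: ler_wpM2r; rewrite ?invr_ge0 ?ler0n // ler_nat leq_pred.
Qed.

End CountDrift.

Lemma frac_types_powR_le (R : realType) (m : R) k s : 0 <= m ->
  powR (frac_types R k s) m
    <= powR (size s)%:R^-1 m * powR ((count_le k s)%:R + m) m.
Proof.
move=> m_ge0; rewrite -powRM ?invr_ge0 ?addr_ge0 //.
apply: ge0_ler_powR; rewrite ?nnegrE ?mulr_ge0 ?invr_ge0 ?addr_ge0 ?divr_ge0 //.
by rewrite mulrC; apply: ler_wpM2r; rewrite ?invr_ge0 // lerDl.
Qed.

Lemma EXm_le_shifted (R : realType) (r m : R) k N :
  0 <= r <= 1 -> 0 <= m -> (1 <= N)%N ->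
  EXm r m k N
    <= powR N%:R^-1 m * yule_exp r N.-1 (fun s => powR ((count_le k s)%:R + m) m).
Proof.
move=> r01 m_ge0 N_gt0; rewrite /EXm -yule_expZ.
apply: ler_yule_exp => // s /andP[/eqP sz_s _].
by rewrite -[N](prednK N_gt0) -sz_s; apply: frac_types_powR_le.
Qed.

Theorem lemma4p2 (R : realType) (r m : R) :
  0 < r < 1 -> 1 <= m ->
  exists C : R, 0 < C /\
    forall N k : nat, (1 <= N)%N -> (1 <= k <= N)%N ->
      EXm r m k N <= powR (k%:R / N%:R) (m * r) * (1 + C / k%:R).
Proof.
move=> /andP[r_gt0 r_lt1] m_ge1.
have r01 : 0 <= r <= 1 by apply/andP; split; lra.
have m_gt0 : 0 < m by lra.
have m_ge0 := ltW m_gt0.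
set b := (1 - r) * m; set A := m * m * expR (m * m).
have b_ge0 : 0 <= b by rewrite mulr_ge0 //; lra.
have A_gt0 : 0 < A by rewrite !mulr_gt0 ?expR_gt0.
exists (A + b + A * b); split; first by have := mulr_ge0 (ltW A_gt0) b_ge0; lra.
move=> N k N_gt0 kN; have /andP[k_gt0 _] := kN.
have kinv01 : 0 <= (k%:R : R)^-1 <= 1 by rewrite invr_ge0 ler0n invf_le1 ?ltr0n ?ler1n.
apply: le_trans (EXm_le_shifted k r01 m_ge0 N_gt0) _.
have h_ge0 (y : nat) : 0 <= powR (y%:R + m) m by apply: powR_ge0.
have h_drift (y : nat) := shifted_powR_drift y m_gt0.
apply: le_trans (ler_wpM2l (powR_ge0 _ _)
  (yule_exp_count_le r01 m_ge0 h_ge0 h_drift kN)) _.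
rewrite powR_rescale ?ltr0n // -/b.
have -> : m - b = m * r by rewrite /b; ring.
apply: ler_wpM2l; first exact: powR_ge0.
apply: le_trans (prod_1Dmul_le (ltW A_gt0) b_ge0 kinv01).
apply: ler_wpM2r; first by rewrite addr_ge0 ?divr_ge0.
exact: powR_1Dmul_le m_ge0 kinv01.
Qed.
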